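(* Let $P$ be an orthogonal polygon without holes, let $\eta\in\mathbb{N}$, and let $S$ be a maximal square of $P$ with side length $d$ such that: the top and bottom sides of $S$ overlap with horizontal edges $e_1$ and $e_2$ of $P$ respectively; $e_1$ contains the top-right corner of $S$; $e_2$ contains the bottom-right corner of $S$; and there is a strip $Y$ between $e_1$ and $e_2$ whose right side is at distance more than $\eta d$ from the right side of $S$. Let $R$ be the rec-pack of width $d$ and strength $\eta$ whose vertical sides have length $d$ and horizontal sides have length $\eta d$, and whose left side coincides with the right side of $S$. If $\mathcal{R}$ is a partial solution with $S\in\mathcal{R}$ such that $R$ does not overlap any rec-pack in $\mathcal{R}$, then $\mathcal{R}\cup\{R\}$ is also a partial solution.
   Context: $P$ is a simple polygon with integer vertex coordinates and axis-parallel edges. A valid square is an axis-parallel square contained in $P$; it is maximal if no larger-area valid square contains it. A strip of $P$ is a maximal axis-parallel non-square rectangular region inside $P$ each of whose two longer sides is completely contained in an edge of $P$. A rec-pack is an axis-parallel rectangle contained in $P$ of dimensions $t\times \eta t$ or $\eta t\times t$ with $\eta\in\mathbb{N}$ ($t$ is its width, $\eta$ its strength); every valid square is a rec-pack; its extraction $\mathsf{ext}(R)$ is the set of the $\eta$ side-$t$ squares tiling $R$. A set $\mathcal{R}'$ of rec-packs is a minimum covering of $P$ if $\bigcup_{R\in\mathcal{R}'}\mathsf{ext}(R)$ is a minimum-cardinality set of valid squares with union $P$ and distinct rec-packs have disjoint extractions. A partial solution is a set of rec-packs contained in some minimum covering. *)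

From Stdlib Require Import Reals ZArith List Arith.
Import ListNotations.
Open Scope R_scope.

(* A polygon is given by its cyclic list of integer vertices. *)
Definition vertex := (Z * Z)%type.
Definition edge := (vertex * vertex)%type.
Definition point := (R * R)%type.

Definition vx (v : vertex) : R := IZR (fst v).
Definition vy (v : vertex) : R := IZR (snd v).

Definition edges (P : list vertex) : list edge :=
  match P with
  | [] => []
  | v :: t => combine P (t ++ [v])
  end.

Definition e_horizontal (e : edge) : Prop := snd (fst e) = snd (snd e).
Definition e_vertical (e : edge) : Prop := fst (fst e) = fst (snd e).

(* closed segment of an axis-parallel edge *)
Definition on_edge (e : edge) (p : point) : Prop :=
  Rmin (vx (fst e)) (vx (snd e)) <= fst p <= Rmax (vx (fst e)) (vx (snd e)) /\
  Rmin (vy (fst e)) (vy (snd e)) <= snd p <= Rmax (vy (fst e)) (vy (snd e)).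

Definition dummy_edge : edge := ((0%Z, 0%Z), (0%Z, 0%Z)).
Definition dummy_vertex : vertex := (0%Z, 0%Z).

(* Simple orthogonal polygon: at least 4 vertices, every edge is nondegenerate
   and axis-parallel, consecutive edges alternate between horizontal and
   vertical, consecutive edges meet only at their common vertex and
   non-consecutive edges are disjoint.  (A simple polygon has no holes.) *)
Definition ortho_polygon (P : list vertex) : Prop :=
  let n := length P in
  let E := edges P in
  (4 <= n)%nat /\
  (forall i, (i < n)%nat ->
     let e := nth i E dummy_edge in
     let e' := nth ((S i) mod n) E dummy_edge in
     fst e <> snd e /\
     ((e_horizontal e /\ e_vertical e') \/ (e_vertical e /\ e_horizontal e'))) /\
  (forall i j p, (i < n)%nat -> (j < n)%nat -> i <> j ->
     on_edge (nth i E dummy_edge) p -> on_edge (nth j E dummy_edge) p ->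
     (j = (S i) mod n /\ p = (vx (nth j P dummy_vertex), vy (nth j P dummy_vertex)))
     \/ (i = (S j) mod n /\ p = (vx (nth i P dummy_vertex), vy (nth i P dummy_vertex)))).

(* ray-casting (half-open rule): vertical edges strictly to the right of p
   whose y-range [ymin, ymax) contains p.y *)
Definition crosses (p : point) (e : edge) : bool :=
  if Z.eq_dec (fst (fst e)) (fst (snd e)) then
    if Rlt_dec (fst p) (vx (fst e)) then
      if Rle_dec (Rmin (vy (fst e)) (vy (snd e))) (snd p) then
        if Rlt_dec (snd p) (Rmax (vy (fst e)) (vy (snd e))) then true else false
      else false
    else false
  else false.

(* The closed region of P: its boundary together with its interior. *)
Definition inP (P : list vertex) (p : point) : Prop :=
  (exists e, In e (edges P) /\ on_edge e p) \/
  Nat.odd (length (filter (crosses p) (edges P))) = true.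

(* lower-left corner (rx, ry), width rw, height rh *)
Record rect := Rect { rx : R; ry : R; rw : R; rh : R }.

Definition in_rect (X : rect) (p : point) : Prop :=
  rx X <= fst p <= rx X + rw X /\ ry X <= snd p <= ry X + rh X.

Definition in_rect_interior (X : rect) (p : point) : Prop :=
  rx X < fst p < rx X + rw X /\ ry X < snd p < ry X + rh X.

Definition rect_sub (X Y : rect) : Prop := forall p, in_rect X p -> in_rect Y p.

Definition overlap (X Y : rect) : Prop :=
  exists p, in_rect_interior X p /\ in_rect_interior Y p.

Definition valid_rect (P : list vertex) (X : rect) : Prop :=
  0 < rw X /\ 0 < rh X /\ forall p, in_rect X p -> inP P p.

Definition is_square (X : rect) : Prop := rw X = rh X.

Definition valid_square (P : list vertex) (X : rect) : Prop :=
  valid_rect P X /\ is_square X.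

Definition maximal_square (P : list vertex) (X : rect) : Prop :=
  valid_square P X /\
  forall Y, valid_square P Y -> rect_sub X Y -> ~ (rw X * rh X < rw Y * rh Y).

Definition hseg_in_edge (xl xr y : R) (e : edge) : Prop :=
  forall x, xl <= x <= xr -> on_edge e (x, y).
Definition vseg_in_edge (x yl yr : R) (e : edge) : Prop :=
  forall y, yl <= y <= yr -> on_edge e (x, y).

Definition strip_candidate (P : list vertex) (Y : rect) : Prop :=
  valid_rect P Y /\ ~ is_square Y /\
  ((rh Y < rw Y /\
    (exists e, In e (edges P) /\ hseg_in_edge (rx Y) (rx Y + rw Y) (ry Y + rh Y) e) /\
    (exists e, In e (edges P) /\ hseg_in_edge (rx Y) (rx Y + rw Y) (ry Y) e))
   \/
   (rw Y < rh Y /\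
    (exists e, In e (edges P) /\ vseg_in_edge (rx Y) (ry Y) (ry Y + rh Y) e) /\
    (exists e, In e (edges P) /\ vseg_in_edge (rx Y + rw Y) (ry Y) (ry Y + rh Y) e))).

Definition is_strip (P : list vertex) (Y : rect) : Prop :=
  strip_candidate P Y /\
  forall Y', strip_candidate P Y' -> rect_sub Y Y' -> Y' = Y.

Definition rec_pack (P : list vertex) (X : rect) : Prop :=
  valid_rect P X /\
  exists k : nat, (1 <= k)%nat /\ (rw X = INR k * rh X \/ rh X = INR k * rw X).

(* width t = min side; extraction = the side-t squares tiling X *)
Definition ext (X : rect) (sq : rect) : Prop :=
  let t := Rmin (rw X) (rh X) in
  rw sq = t /\ rh sq = t /\
  exists i : nat,
    (rh X <= rw X /\ INR i * t < rw X /\ rx sq = rx X + INR i * t /\ ry sq = ry X)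
    \/ (rw X < rh X /\ INR i * t < rh X /\ rx sq = rx X /\ ry sq = ry X + INR i * t).

Definition covers (P : list vertex) (U : rect -> Prop) : Prop :=
  (forall sq, U sq -> valid_square P sq) /\
  (forall p, inP P p <-> exists sq, U sq /\ in_rect sq p).

Definition min_square_cover (P : list vertex) (U : rect -> Prop) : Prop :=
  covers P U /\
  exists L : list rect, NoDup L /\ (forall sq, In sq L <-> U sq) /\
    forall L' : list rect, NoDup L' -> covers P (fun sq => In sq L') ->
      (length L <= length L')%nat.

Definition min_covering (P : list vertex) (M : rect -> Prop) : Prop :=
  (forall X, M X -> rec_pack P X) /\
  (forall X Y sq, M X -> M Y -> X <> Y -> ext X sq -> ext Y sq -> False) /\
  min_square_cover P (fun sq => exists X, M X /\ ext X sq).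

Definition partial_solution (P : list vertex) (Rs : rect -> Prop) : Prop :=
  exists M, min_covering P M /\ forall X, Rs X -> M X.

Definition right_pack (S : rect) (eta : nat) : rect :=
  Rect (rx S + rw S) (ry S) (INR eta * rw S) (rw S).

Definition hseg_overlaps_edge (xl xr y : R) (e : edge) : Prop :=
  exists a b, a < b /\ forall x, a <= x <= b -> xl <= x <= xr /\ on_edge e (x, y).

(* The rec-pack R lies in the band between e1 and e2, from the right side of S
   to the right end of the strip Y.  The part of the band between S and Y holds
   no vertex of P: a horizontal edge separates the inside of P from the outside
   (a ray-casting parity count), so the boundary cannot leave that part of the
   band, yet it must reach e1.  Hence the band, and R, lie inside P.
   In a minimum covering, every square meeting the midline of R is confined to
   the band, so its side is at most d, and a greedy left-to-right chain of them
   along the midline has at least eta members, all inside S and R.  Trading the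
   chain for the eta squares of R keeps the cover minimum; since R overlaps no
   member of Rs, no traded square belongs to the extraction of a member of Rs. *)

From Stdlib Require Import Reals ZArith List Arith Lra Lia Classical.
Import ListNotations.
Open Scope R_scope.

Definition noninteger (x : R) : Prop := forall z : Z, x <> IZR z.

Lemma noninteger_between (z : Z) (x : R) : IZR z < x < IZR z + 1 -> noninteger x.
Proof.
  intros [H1 H2] w ->.
  apply lt_IZR in H1. rewrite <- plus_IZR in H2. apply lt_IZR in H2. lia.
Qed.

Lemma exists_noninteger_between (a b : R) :
  a < b -> exists x, a < x < b /\ noninteger x.
Proof.
  intros Hab.
  destruct (classic (exists z, (a + b) / 2 = IZR z)) as [[z Hz]|Hn].
  - set (h := Rmin ((b - a) / 4) (1 / 2)).
    assert (0 < h) by (apply Rmin_pos; lra).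
    assert (h <= (b - a) / 4) by apply Rmin_l.
    assert (h <= 1 / 2) by apply Rmin_r.
    exists ((a + b) / 2 + h). split; [lra|]. apply (noninteger_between z). lra.
  - exists ((a + b) / 2). split; [lra|]. intros z Hz. apply Hn. eauto.
Qed.

Section Integer_offsets.
Variable eps : R.
Hypothesis Heps : 0 < eps < 1.

Lemma IZR_le_plus_frac (m n : Z) : IZR m <= IZR n + eps <-> (m <= n)%Z.
Proof.
  split; intros H.
  - destruct (Z_le_gt_dec m n) as [|Hg]; [assumption|].
    assert (IZR (n + 1) <= IZR m) by (apply IZR_le; lia). rewrite plus_IZR in *. lra.
  - apply IZR_le in H. lra.
Qed.

Lemma IZR_plus_frac_lt (n m : Z) : IZR n + eps < IZR m <-> (n < m)%Z.
Proof.
  split; intros H.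
  - destruct (Z_lt_ge_dec n m) as [|Hg]; [assumption|].
    assert (IZR m <= IZR n) by (apply IZR_le; lia). lra.
  - assert (IZR (n + 1) <= IZR m) by (apply IZR_le; lia). rewrite plus_IZR in *. lra.
Qed.

Lemma IZR_le_minus_frac (m n : Z) : IZR m <= IZR n - eps <-> (m < n)%Z.
Proof.
  split; intros H.
  - destruct (Z_lt_ge_dec m n) as [|Hg]; [assumption|].
    assert (IZR n <= IZR m) by (apply IZR_le; lia). lra.
  - assert (IZR (m + 1) <= IZR n) by (apply IZR_le; lia). rewrite plus_IZR in *. lra.
Qed.

Lemma IZR_minus_frac_lt (n m : Z) : IZR n - eps < IZR m <-> (n <= m)%Z.
Proof.
  split; intros H.
  - destruct (Z_le_gt_dec n m) as [|Hg]; [assumption|].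
    assert (IZR (m + 1) <= IZR n) by (apply IZR_le; lia). rewrite plus_IZR in *. lra.
  - apply IZR_le in H. lra.
Qed.

End Integer_offsets.

Lemma Rmin_IZR (a b : Z) : Rmin (IZR a) (IZR b) = IZR (Z.min a b).
Proof.
  unfold Rmin. destruct (Rle_dec (IZR a) (IZR b)) as [H|H].
  - apply le_IZR in H. rewrite Z.min_l; auto.
  - assert (b < a)%Z by (apply lt_IZR; lra). rewrite Z.min_r; auto; lia.
Qed.

Lemma Rmax_IZR (a b : Z) : Rmax (IZR a) (IZR b) = IZR (Z.max a b).
Proof.
  unfold Rmax. destruct (Rle_dec (IZR a) (IZR b)) as [H|H].
  - apply le_IZR in H. rewrite Z.max_r; auto.
  - assert (b < a)%Z by (apply lt_IZR; lra). rewrite Z.max_l; auto; lia.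
Qed.

Lemma Rmin_Rmax_between (a b x : R) :
  a <= x <= b \/ b <= x <= a -> Rmin a b <= x <= Rmax a b.
Proof. unfold Rmin, Rmax; destruct (Rle_dec a b); lra. Qed.

Lemma exists_small_positive (a b : R) :
  0 < a -> 0 < b -> exists eps, 0 < eps < 1 /\ eps <= a /\ eps <= b.
Proof.
  intros Ha Hb. exists (Rmin (1/2) (Rmin a b)).
  pose proof (Rmin_l (1/2) (Rmin a b)). pose proof (Rmin_r (1/2) (Rmin a b)).
  pose proof (Rmin_l a b). pose proof (Rmin_r a b).
  assert (0 < Rmin (1/2) (Rmin a b)) by (apply Rmin_pos; [lra|apply Rmin_pos; lra]).
  repeat split; lra.
Qed.

Lemma length_edges (P : list vertex) : length (edges P) = length P.
Proof.
  destruct P as [|v t]; [reflexivity|]. unfold edges, edge.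
  rewrite length_combine, length_app. simpl. rewrite Nat.add_1_r, Nat.min_id. reflexivity.
Qed.

Lemma nth_edges (P : list vertex) (i : nat) : (i < length P)%nat ->
  nth i (edges P) dummy_edge = (nth i P dummy_vertex, nth (S i mod length P) P dummy_vertex).
Proof.
  destruct P as [|v t]; [simpl; lia|]. intros Hi.
  change (edges (v :: t)) with (combine (v :: t) (t ++ [v])).
  change dummy_edge with (dummy_vertex, dummy_vertex).
  unfold edge. rewrite combine_nth by (simpl; rewrite length_app; simpl; lia).
  f_equal. simpl length in *.
  destruct (Nat.eq_dec i (length t)) as [->|Hne].
  - rewrite app_nth2, Nat.sub_diag, Nat.Div0.mod_same by lia. reflexivity.
  - rewrite app_nth1, Nat.mod_small by lia. reflexivity.
Qed.

Lemma ortho_polygon_edge (P : list vertex) (e : edge) :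
  ortho_polygon P -> In e (edges P) ->
  fst e <> snd e /\ (e_horizontal e \/ e_vertical e).
Proof.
  intros [_ [Hedge _]] Hin.
  destruct (In_nth _ _ dummy_edge Hin) as [i [Hi Hei]]. rewrite length_edges in Hi.
  specialize (Hedge i Hi). cbv zeta in Hedge. rewrite Hei in Hedge.
  destruct Hedge as [Hne [[? _]|[? _]]]; auto.
Qed.

Lemma horizontal_edge_y (e : edge) (x y : R) : e_horizontal e -> on_edge e (x, y) -> y = vy (fst e).
Proof.
  unfold e_horizontal, on_edge, vy. intros Hh [_ Hy]. simpl in Hy. rewrite Hh in *.
  rewrite Rmin_left, Rmax_left in Hy by lra. lra.
Qed.

Lemma vertical_edge_x (e : edge) (x y : R) : e_vertical e -> on_edge e (x, y) -> x = vx (fst e).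
Proof.
  unfold e_vertical, on_edge, vx. intros Hv [Hx _]. simpl in Hx. rewrite Hv in *.
  rewrite Rmin_left, Rmax_left in Hx by lra. lra.
Qed.

Lemma on_edge_between (e : edge) (x1 x2 t y : R) :
  on_edge e (x1, y) -> on_edge e (x2, y) -> x1 <= t <= x2 -> on_edge e (t, y).
Proof. unfold on_edge; simpl. lra. Qed.

Lemma on_edge_strict_inside (e : edge) (xa xb x y : R) :
  on_edge e (xa, y) -> on_edge e (xb, y) -> xa < x < xb ->
  Rmin (vx (fst e)) (vx (snd e)) < x < Rmax (vx (fst e)) (vx (snd e)).
Proof. unfold on_edge; simpl; lra. Qed.

Lemma on_edge_noninteger_strict (e : edge) (x y : R) : on_edge e (x, y) -> noninteger x ->
  Rmin (vx (fst e)) (vx (snd e)) < x < Rmax (vx (fst e)) (vx (snd e)).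
Proof.
  intros [Hx _] Hn. simpl in Hx.
  pose proof (Hn (fst (fst e))). pose proof (Hn (fst (snd e))). unfold vx in *.
  unfold Rmin, Rmax in *. destruct (Rle_dec _ _); destruct Hx as [[Hl|Hl] [Hr|Hr]];
    try (exfalso; congruence); lra.
Qed.

Lemma edge_interior_not_shared (P : list vertex) (i k : nat) (p : point) :
  ortho_polygon P -> (i < length P)%nat -> (k < length P)%nat -> i <> k ->
  on_edge (nth i (edges P) dummy_edge) p -> on_edge (nth k (edges P) dummy_edge) p ->
  Rmin (vx (fst (nth i (edges P) dummy_edge))) (vx (snd (nth i (edges P) dummy_edge))) < fst p <
  Rmax (vx (fst (nth i (edges P) dummy_edge))) (vx (snd (nth i (edges P) dummy_edge))) ->
  False.
Proof.
  intros [_ [_ Hsimple]] Hi Hk Hik H1 H2 Hs.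
  rewrite (nth_edges P i Hi) in Hs. simpl in Hs.
  destruct (Hsimple i k p Hi Hk Hik H1 H2) as [[-> ->]|[_ ->]];
    simpl in Hs; unfold Rmin, Rmax in Hs; destruct (Rle_dec _ _); lra.
Qed.

Lemma vertical_edge_avoids_horizontal_interior (P : list vertex) (e : edge) (k : nat) (p : point) :
  ortho_polygon P -> In e (edges P) -> e_horizontal e -> (k < length P)%nat ->
  e_vertical (nth k (edges P) dummy_edge) ->
  on_edge e p -> on_edge (nth k (edges P) dummy_edge) p ->
  Rmin (vx (fst e)) (vx (snd e)) < fst p < Rmax (vx (fst e)) (vx (snd e)) -> False.
Proof.
  intros HP Hin Hh Hk Hv H1 H2 Hs.
  destruct (In_nth _ _ dummy_edge Hin) as [i [Hi Hei]]. rewrite length_edges in Hi.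
  destruct (Nat.eq_dec i k) as [<-|Hne].
  - rewrite Hei in Hv. destruct (ortho_polygon_edge P e HP Hin) as [Hne _].
    apply Hne. unfold e_horizontal, e_vertical in *.
    destruct (fst e), (snd e); simpl in *; congruence.
  - subst e. exact (edge_interior_not_shared P i k p HP Hi Hk Hne H1 H2 Hs).
Qed.

(** * Ray-casting parity *)

Lemma list_sum_map_add {A : Type} (F G : A -> nat) (l : list A) :
  list_sum (map (fun a => F a + G a)%nat l) = (list_sum (map F l) + list_sum (map G l))%nat.
Proof. induction l; simpl; lia. Qed.

Lemma length_filter_b2n {A : Type} (f : A -> bool) (l : list A) :
  length (filter f l) = list_sum (map (fun a => Nat.b2n (f a)) l).
Proof. induction l as [|a l IH]; simpl; auto. destruct (f a); simpl; lia. Qed.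

Lemma Even_list_sum {A : Type} (F : A -> nat) (l : list A) :
  (forall a, In a l -> Nat.Even (F a)) -> Nat.Even (list_sum (map F l)).
Proof.
  induction l as [|a l IH]; simpl; intros H; [exists 0%nat; reflexivity|].
  apply Nat.Even_Even_add; auto.
Qed.

Lemma Odd_list_sum_one_odd {A : Type} (F : A -> nat) (l : list A) (d : A) (i : nat) :
  (i < length l)%nat -> Nat.Odd (F (nth i l d)) ->
  (forall j, (j < length l)%nat -> j <> i -> Nat.Even (F (nth j l d))) ->
  Nat.Odd (list_sum (map F l)).
Proof.
  revert i. induction l as [|a l IH]; intros i Hi Hodd Heven; simpl in *; [lia|].
  destruct i as [|i].
  - apply Nat.Odd_add_l; auto. apply Even_list_sum. intros b Hb.
    destruct (In_nth _ _ d Hb) as [j [Hj <-]]. apply (Heven (S j)); lia.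
  - apply Nat.Odd_add_r.
    + apply (Heven 0%nat); lia.
    + apply (IH i); [lia|exact Hodd|]. intros j Hj Hji. apply (Heven (S j)); lia.
Qed.

(* Every vertex is the endpoint of exactly two edges. *)
Lemma Even_list_sum_endpoints (h : vertex -> nat) (P : list vertex) :
  Nat.Even (list_sum (map (fun e : edge => h (fst e) + h (snd e))%nat (edges P))).
Proof.
  destruct P as [|v t]; [exists 0%nat; reflexivity|].
  change (edges (v :: t)) with (combine (v :: t) (t ++ [v])).
  assert (Hcomb : forall l1 l2 : list vertex, length l1 = length l2 ->
    list_sum (map (fun e : edge => h (fst e) + h (snd e))%nat (combine l1 l2)) =
    (list_sum (map h l1) + list_sum (map h l2))%nat).
  { induction l1; destruct l2; simpl; intros; try lia. rewrite IHl1 by lia. lia. }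
  rewrite Hcomb by (simpl; rewrite length_app; simpl; lia).
  rewrite map_app, list_sum_app. simpl. exists (h v + list_sum (map h t))%nat. lia.
Qed.

Lemma inP_off_boundary_odd (P : list vertex) (p : point) :
  (forall e, In e (edges P) -> ~ on_edge e p) -> inP P p ->
  Nat.Odd (length (filter (crosses p) (edges P))).
Proof.
  intros Hoff [[e [Hin Hon]]|Hodd]; [exfalso; exact (Hoff e Hin Hon)|].
  apply Nat.odd_spec, Hodd.
Qed.

Lemma inP_noninteger_odd (P : list vertex) (x y : R) :
  ortho_polygon P -> noninteger x -> noninteger y -> inP P (x, y) ->
  Nat.Odd (length (filter (crosses (x, y)) (edges P))).
Proof.
  intros HP Hx Hy. apply inP_off_boundary_odd. intros e Hin Hon.
  destruct (ortho_polygon_edge P e HP Hin) as [_ [Hh|Hv]].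
  - exact (Hy _ (horizontal_edge_y e x y Hh Hon)).
  - exact (Hx _ (vertical_edge_x e x y Hv Hon)).
Qed.

Lemma crosses_nonvertical (p : point) (e : edge) :
  fst (fst e) <> fst (snd e) -> crosses p e = false.
Proof. intros Hne. unfold crosses. destruct (Z.eq_dec _ _); [contradiction|reflexivity]. Qed.

Section Crossing_parity.

Variables (x0 : R) (Y0 : Z) (eps : R).
Hypothesis Heps : 0 < eps < 1.

Definition right_on_level (v : vertex) : nat :=
  if Z.eq_dec (snd v) Y0 then if Rlt_dec x0 (vx v) then 1%nat else 0%nat else 0%nat.

(* The rays from (x0, Y0 + eps) and (x0, Y0 - eps) are crossed by the same
   vertical edges, except those with exactly one endpoint on level Y0 to the right of x0. *)
Definition crossing_weight (e : edge) : nat :=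
  (Nat.b2n (crosses (x0, (IZR Y0 + eps)%R) e) + Nat.b2n (crosses (x0, (IZR Y0 - eps)%R) e)
   + (right_on_level (fst e) + right_on_level (snd e)))%nat.

Lemma vertical_crossing_weight_even (k a b : Z) :
  a <> b -> Nat.Even (crossing_weight ((k, a), (k, b))).
Proof.
  intros Hab. unfold crossing_weight, right_on_level, crosses, vx, vy. simpl.
  destruct (Z.eq_dec k k) as [_|]; [|congruence].
  rewrite !Rmin_IZR, !Rmax_IZR.
  destruct (Rlt_dec x0 (IZR k)) as [Hlt|Hlt].
  - apply Nat.even_spec.
    destruct (Rle_dec (IZR (Z.min a b)) (IZR Y0 + eps)) as [r1|r1];
      [apply (IZR_le_plus_frac _ Heps) in r1 | rewrite (IZR_le_plus_frac _ Heps) in r1];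
    destruct (Rlt_dec (IZR Y0 + eps) (IZR (Z.max a b))) as [r2|r2];
      [apply (IZR_plus_frac_lt _ Heps) in r2 | rewrite (IZR_plus_frac_lt _ Heps) in r2 | |];
    destruct (Rle_dec (IZR (Z.min a b)) (IZR Y0 - eps)) as [r3|r3];
      try apply (IZR_le_minus_frac _ Heps) in r3; try rewrite (IZR_le_minus_frac _ Heps) in r3;
    destruct (Rlt_dec (IZR Y0 - eps) (IZR (Z.max a b))) as [r4|r4];
      try apply (IZR_minus_frac_lt _ Heps) in r4; try rewrite (IZR_minus_frac_lt _ Heps) in r4;
    destruct (Z.eq_dec a Y0); destruct (Z.eq_dec b Y0);
    try reflexivity; exfalso; lia.
  - destruct (Z.eq_dec a Y0); destruct (Z.eq_dec b Y0); exists 0%nat; reflexivity.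
Qed.

Lemma horizontal_crossing_weight_odd (e : edge) :
  e_horizontal e -> fst (fst e) <> fst (snd e) -> snd (fst e) = Y0 ->
  Rmin (vx (fst e)) (vx (snd e)) < x0 < Rmax (vx (fst e)) (vx (snd e)) ->
  Nat.Odd (crossing_weight e).
Proof.
  intros Hh Hne Hlev Hx. unfold crossing_weight. rewrite !crosses_nonvertical by exact Hne.
  destruct e as [[ux uy] [wx wy]]. unfold e_horizontal in Hh. simpl in *. subst wy uy.
  unfold right_on_level, vx in *. simpl in *. destruct (Z.eq_dec Y0 Y0); [|congruence].
  unfold Rmin, Rmax in Hx.
  destruct (Rlt_dec x0 (IZR ux)); destruct (Rlt_dec x0 (IZR wx));
    destruct (Rle_dec (IZR ux) (IZR wx)); try lra; exists 0%nat; reflexivity.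
Qed.

Lemma horizontal_crossing_weight_even (e : edge) :
  e_horizontal e -> fst (fst e) <> fst (snd e) -> ~ on_edge e (x0, IZR Y0) ->
  Nat.Even (crossing_weight e).
Proof.
  intros Hh Hne Hoff. unfold crossing_weight. rewrite !crosses_nonvertical by exact Hne.
  destruct e as [[ux uy] [wx wy]]. unfold e_horizontal in Hh. simpl in *. subst wy.
  unfold right_on_level. simpl.
  destruct (Z.eq_dec uy Y0) as [->|]; [|exists 0%nat; reflexivity].
  assert (Hout : ~ Rmin (vx (ux, Y0)) (vx (wx, Y0)) <= x0 <= Rmax (vx (ux, Y0)) (vx (wx, Y0))).
  { intros Hx. apply Hoff. split; [exact Hx|]. simpl. apply Rmin_Rmax_between. unfold vy. simpl. lra. }
  unfold vx in *. simpl in *.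
  destruct (Rlt_dec x0 (IZR ux)); destruct (Rlt_dec x0 (IZR wx));
    try (exists 1%nat; reflexivity); try (exists 0%nat; reflexivity);
    exfalso; apply Hout, Rmin_Rmax_between; lra.
Qed.

End Crossing_parity.

Lemma crossing_weight_sum_odd (P : list vertex) (e : edge) (x0 eps : R) :
  ortho_polygon P -> In e (edges P) -> e_horizontal e -> on_edge e (x0, IZR (snd (fst e))) ->
  noninteger x0 -> 0 < eps < 1 ->
  Nat.Odd (list_sum (map (crossing_weight x0 (snd (fst e)) eps) (edges P))).
Proof.
  intros HP Hin Hh Hon Hx0 Heps.
  destruct (In_nth _ _ dummy_edge Hin) as [i [Hi Hei]].
  assert (Hi' : (i < length P)%nat) by (rewrite <- length_edges; exact Hi).
  assert (Hstrict := on_edge_noninteger_strict e _ _ Hon Hx0).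
  apply (Odd_list_sum_one_odd _ _ dummy_edge i Hi).
  - rewrite Hei. destruct (ortho_polygon_edge P e HP Hin) as [Hne _].
    apply horizontal_crossing_weight_odd; auto.
    intros Hx. apply Hne. destruct e as [[ux uy] [wx wy]].
    unfold e_horizontal in Hh. simpl in *. congruence.
  - intros j Hj Hji.
    assert (Hj' : (j < length P)%nat) by (rewrite <- length_edges; exact Hj).
    assert (Hinj : In (nth j (edges P) dummy_edge) (edges P)) by (apply nth_In; exact Hj).
    destruct (ortho_polygon_edge P _ HP Hinj) as [Hne [Hh'|Hv']].
    + apply horizontal_crossing_weight_even; [exact Hh'| |].
      * intros Hx. apply Hne. destruct (nth j (edges P) dummy_edge) as [[ux uy] [wx wy]].
        unfold e_horizontal in Hh'. simpl in *. congruence.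
      * intros Hon'. subst e.
        exact (edge_interior_not_shared P i j _ HP Hi' Hj' (not_eq_sym Hji) Hon Hon' Hstrict).
    + destruct (nth j (edges P) dummy_edge) as [[ux uy] [wx wy]].
      unfold e_vertical in Hv'. simpl in *. subst wx.
      apply vertical_crossing_weight_even; [exact Heps|]. congruence.
Qed.

(* The crossing weights sum to an odd number, but also to the two ray-casting
   counts, both odd, plus an even number of endpoint incidences. *)
Lemma horizontal_edge_separates (P : list vertex) (e : edge) (x0 y eps : R) :
  ortho_polygon P -> In e (edges P) -> e_horizontal e -> on_edge e (x0, y) ->
  noninteger x0 -> 0 < eps < 1 ->
  inP P (x0, y + eps) -> inP P (x0, y - eps) -> False.
Proof.
  intros HP Hin Hh Hon Hx0 Heps Habove Hbelow.
  set (Y0 := snd (fst e)).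
  assert (Hy : y = IZR Y0) by exact (horizontal_edge_y e x0 y Hh Hon).
  subst y.
  assert (Hodd_above : Nat.Odd (length (filter (crosses (x0, IZR Y0 + eps)) (edges P)))).
  { apply inP_noninteger_odd; [exact HP|exact Hx0| |exact Habove].
    apply (noninteger_between Y0). lra. }
  assert (Hodd_below : Nat.Odd (length (filter (crosses (x0, IZR Y0 - eps)) (edges P)))).
  { apply inP_noninteger_odd; [exact HP|exact Hx0| |exact Hbelow].
    apply (noninteger_between (Y0 - 1)). rewrite minus_IZR. lra. }
  assert (Hsum : list_sum (map (crossing_weight x0 Y0 eps) (edges P)) =
    (length (filter (crosses (x0, (IZR Y0 + eps)%R)) (edges P))
     + length (filter (crosses (x0, (IZR Y0 - eps)%R)) (edges P))
     + list_sum (map (fun e : edge =>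
         right_on_level x0 Y0 (fst e) + right_on_level x0 Y0 (snd e)) (edges P)))%nat).
  { rewrite !length_filter_b2n, <- !list_sum_map_add. reflexivity. }
  apply (Nat.Even_Odd_False (list_sum (map (crossing_weight x0 Y0 eps) (edges P)))).
  - rewrite Hsum. apply Nat.Even_Even_add; [apply Nat.Odd_Odd_add; assumption|].
    apply Even_list_sum_endpoints.
  - exact (crossing_weight_sum_odd P e x0 eps HP Hin Hh Hon Hx0 Heps).
Qed.

(** * Bands between two horizontal edges *)

Lemma valid_rect_not_across_edge (P : list vertex) (e : edge) (y xa xb : R) (Q : rect) (p : R) :
  ortho_polygon P -> In e (edges P) -> e_horizontal e ->
  (forall t, xa <= t <= xb -> on_edge e (t, y)) ->
  valid_rect P Q -> rx Q <= p <= rx Q + rw Q -> xa < p < xb ->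
  ~ (ry Q < y < ry Q + rh Q).
Proof.
  intros HP Hin Hh Hon [Hw [_ HQ]] Hp Hpab Hy.
  destruct (exists_noninteger_between (Rmax (rx Q) xa) (Rmin (rx Q + rw Q) xb)) as [x0 [Hx0 Hni]].
  { unfold Rmax, Rmin; destruct (Rle_dec _ _); destruct (Rle_dec _ _); lra. }
  pose proof (Rmax_l (rx Q) xa). pose proof (Rmax_r (rx Q) xa).
  pose proof (Rmin_l (rx Q + rw Q) xb). pose proof (Rmin_r (rx Q + rw Q) xb).
  destruct (exists_small_positive (y - ry Q) (ry Q + rh Q - y)) as [eps [Heps [Ha Hb]]]; try lra.
  apply (horizontal_edge_separates P e x0 y eps HP Hin Hh (Hon x0 ltac:(lra)) Hni Heps);
    apply HQ; split; simpl; lra.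
Qed.

Lemma valid_rect_within_band (P : list vertex) (e1 e2 : edge) (xa xb yl yh : R)
    (Q : rect) (p yq : R) :
  ortho_polygon P -> In e1 (edges P) -> e_horizontal e1 -> In e2 (edges P) -> e_horizontal e2 ->
  (forall t, xa <= t <= xb -> on_edge e1 (t, yh)) ->
  (forall t, xa <= t <= xb -> on_edge e2 (t, yl)) ->
  valid_rect P Q -> in_rect Q (p, yq) -> xa < p < xb -> yl < yq < yh ->
  yl <= ry Q /\ ry Q + rh Q <= yh.
Proof.
  intros HP He1 Hh1 He2 Hh2 Hon1 Hon2 HQ [Hp Hyq] Hpab Hband. simpl in Hp, Hyq.
  pose proof (valid_rect_not_across_edge P e1 yh xa xb Q p HP He1 Hh1 Hon1 HQ Hp Hpab).
  pose proof (valid_rect_not_across_edge P e2 yl xa xb Q p HP He2 Hh2 Hon2 HQ Hp Hpab).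
  lra.
Qed.

Section Gap_between_edges.

Variables (P : list vertex) (e1 e2 : edge) (xa xl xr xb yl yh dL dR : R).
Hypothesis HP : ortho_polygon P.
Hypothesis He1 : In e1 (edges P).
Hypothesis Hh1 : e_horizontal e1.
Hypothesis He2 : In e2 (edges P).
Hypothesis Hh2 : e_horizontal e2.
Hypothesis Hon1 : forall t, xa <= t <= xb -> on_edge e1 (t, yh).
Hypothesis Hon2 : forall t, xa <= t <= xb -> on_edge e2 (t, yl).
Hypothesis Hxa : xa < xl.
Hypothesis Hxlr : xl <= xr.
Hypothesis Hxb : xr < xb.
Hypothesis HdL : 0 < dL.
Hypothesis Hleft : forall p, xl - dL <= fst p <= xl -> yl <= snd p <= yh -> inP P p.
Hypothesis HdR : 0 < dR.
Hypothesis Hright : forall p, xr <= fst p <= xr + dR -> yl <= snd p <= yh -> inP P p.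

Definition in_gap (v : vertex) : Prop := xl <= vx v <= xr /\ yl < vy v < yh.

Lemma vertical_edge_not_through_gap_boundary (k : nat) (x : R) :
  (k < length P)%nat -> e_vertical (nth k (edges P) dummy_edge) -> xl <= x <= xr ->
  ~ on_edge (nth k (edges P) dummy_edge) (x, yh) /\ ~ on_edge (nth k (edges P) dummy_edge) (x, yl).
Proof.
  intros Hk Hv Hx. split; intros Hon.
  - apply (vertical_edge_avoids_horizontal_interior P e1 k (x, yh) HP He1 Hh1 Hk Hv);
      [apply Hon1; lra|exact Hon|].
    apply (on_edge_strict_inside _ xa xb _ yh); [apply Hon1; lra|apply Hon1; lra|simpl; lra].
  - apply (vertical_edge_avoids_horizontal_interior P e2 k (x, yl) HP He2 Hh2 Hk Hv);
      [apply Hon2; lra|exact Hon|].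
    apply (on_edge_strict_inside _ xa xb _ yl); [apply Hon2; lra|apply Hon2; lra|simpl; lra].
Qed.

(* A horizontal edge leaving the gap would separate one of the two blocks. *)
Lemma in_gap_next (k : nat) : (k < length P)%nat ->
  in_gap (nth k P dummy_vertex) -> in_gap (nth (S k mod length P) P dummy_vertex).
Proof.
  intros Hk [Hx Hy].
  pose proof (nth_edges P k Hk) as Hek.
  set (u := nth k P dummy_vertex) in *. set (w := nth (S k mod length P) P dummy_vertex) in *.
  assert (Hin : In (u, w) (edges P)) by (rewrite <- Hek; apply nth_In; rewrite length_edges; auto).
  destruct (ortho_polygon_edge P _ HP Hin) as [_ [Hh|Hv]].
  - assert (Hvy : vy w = vy u) by (unfold vy, e_horizontal in *; simpl in Hh; rewrite Hh; reflexivity).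
    destruct (exists_small_positive (vy u - yl) (yh - vy u)) as [eps [Heps [Ha Hb]]]; try lra.
    assert (Hsep : forall x0, noninteger x0 -> Rmin (vx u) (vx w) <= x0 <= Rmax (vx u) (vx w) ->
      inP P (x0, vy u + eps) -> inP P (x0, vy u - eps) -> False).
    { intros x0 Hni Hx0. apply (horizontal_edge_separates P (u, w) x0 (vy u) eps HP Hin Hh); auto.
      split; simpl; [exact Hx0|apply Rmin_Rmax_between; lra]. }
    split; [|rewrite Hvy; lra].
    split.
    + destruct (Rlt_le_dec (vx w) xl) as [Hlt|]; [exfalso|assumption].
      destruct (exists_noninteger_between (Rmax (vx w) (xl - dL)) xl) as [x0 [Hx0 Hni]].
      { unfold Rmax; destruct (Rle_dec _ _); lra. }
      pose proof (Rmax_l (vx w) (xl - dL)). pose proof (Rmax_r (vx w) (xl - dL)).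
      apply (Hsep x0 Hni); [apply Rmin_Rmax_between; lra|apply Hleft; simpl; lra|apply Hleft; simpl; lra].
    + destruct (Rlt_le_dec xr (vx w)) as [Hgt|]; [exfalso|assumption].
      destruct (exists_noninteger_between xr (Rmin (vx w) (xr + dR))) as [x0 [Hx0 Hni]].
      { apply Rmin_glb_lt; lra. }
      pose proof (Rmin_l (vx w) (xr + dR)). pose proof (Rmin_r (vx w) (xr + dR)).
      apply (Hsep x0 Hni); [apply Rmin_Rmax_between; lra|apply Hright; simpl; lra|apply Hright; simpl; lra].
  - assert (Hvx : vx w = vx u) by (unfold vx, e_vertical in *; simpl in Hv; rewrite Hv; reflexivity).
    assert (Hvk : e_vertical (nth k (edges P) dummy_edge)) by (rewrite Hek; exact Hv).
    destruct (vertical_edge_not_through_gap_boundary k (vx u) Hk Hvk Hx) as [Htop Hbot].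
    rewrite Hek in Htop, Hbot.
    split; [lra|]. split.
    + destruct (Rle_lt_dec (vy w) yl) as [Hle|]; [exfalso|assumption].
      apply Hbot. split; simpl; apply Rmin_Rmax_between; lra.
    + destruct (Rle_lt_dec yh (vy w)) as [Hge|]; [exfalso|assumption].
      apply Htop. split; simpl; apply Rmin_Rmax_between; lra.
Qed.

(* Following the boundary from a gap vertex never leaves the gap,
   yet the vertices of e1 lie on level yh. *)
Lemma no_vertex_in_gap (k : nat) : (k < length P)%nat -> ~ in_gap (nth k P dummy_vertex).
Proof.
  intros Hk Hgap. set (n := length P) in *.
  assert (Hall : forall m, in_gap (nth ((k + m) mod n) P dummy_vertex)).
  { induction m as [|m IH].
    - rewrite Nat.add_0_r, Nat.mod_small by lia. exact Hgap.
    - replace ((k + S m) mod n)%nat with (S ((k + m) mod n) mod n)%nat.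
      + apply in_gap_next; [apply Nat.mod_upper_bound; lia|exact IH].
      + rewrite <- Nat.add_1_r, Nat.Div0.add_mod_idemp_l. f_equal. lia. }
  destruct (In_nth _ _ dummy_edge He1) as [i [Hi Hei]]. rewrite length_edges in Hi.
  specialize (Hall (n - k + i)%nat).
  replace ((k + (n - k + i)) mod n)%nat with i in Hall.
  2:{ replace (k + (n - k + i))%nat with (i + 1 * n)%nat by lia.
      rewrite Nat.Div0.mod_add, Nat.mod_small; lia. }
  rewrite nth_edges in Hei by exact Hi.
  assert (Hyh : yh = vy (fst e1)) by (apply (horizontal_edge_y e1 xl); auto; apply Hon1; lra).
  rewrite <- Hei in Hyh. simpl in Hyh. destruct Hall. lra.
Qed.

Lemma crosses_gap_invariant (x x' y : R) (e : edge) :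
  In e (edges P) -> xl <= x <= xr -> xr < x' < IZR (up xr) -> yl < y < yh ->
  crosses (x, y) e = crosses (x', y) e.
Proof.
  intros Hin Hx Hx' Hy.
  destruct (In_nth _ _ dummy_edge Hin) as [k [Hk Hek]]. rewrite length_edges in Hk.
  pose proof (nth_edges P k Hk) as Hek'. rewrite Hek in Hek'.
  assert (Hk2 : (S k mod length P < length P)%nat) by (apply Nat.mod_upper_bound; lia).
  destruct e as [u w]. injection Hek' as Hu Hw.
  unfold crosses. simpl fst; simpl snd.
  destruct (Z.eq_dec (fst u) (fst w)) as [Heq|]; [|reflexivity].
  assert (Hvx : vx w = vx u) by (unfold vx; rewrite Heq; reflexivity).
  destruct (Rlt_dec x (vx u)) as [H1|H1]; destruct (Rlt_dec x' (vx u)) as [H2|H2]; try reflexivity;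
    [|exfalso; lra].
  destruct (Rle_dec (Rmin (vy u) (vy w)) y) as [H3|]; [|reflexivity].
  destruct (Rlt_dec y (Rmax (vy u) (vy w))) as [H4|]; [|reflexivity].
  exfalso.
  assert (Hux : vx u <= xr).
  { destruct (Rle_lt_dec (vx u) xr) as [|Hlt]; auto. exfalso. unfold vx in *.
    assert (Hlt2 : (fst u < up xr)%Z) by (apply lt_IZR; lra).
    assert (IZR (fst u) <= IZR (up xr - 1)) by (apply IZR_le; lia). rewrite minus_IZR in *.
    pose proof (archimed xr). lra. }
  assert (Hvk : e_vertical (nth k (edges P) dummy_edge)) by (rewrite Hek; exact Heq).
  destruct (vertical_edge_not_through_gap_boundary k (vx u) Hk Hvk ltac:(lra)) as [Htop _].
  rewrite Hek in Htop.
  assert (Htop_lt : Rmax (vy u) (vy w) < yh).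
  { destruct (Rlt_le_dec (Rmax (vy u) (vy w)) yh) as [|Hge]; [assumption|exfalso].
    apply Htop. split; simpl; [apply Rmin_Rmax_between|]; lra. }
  unfold Rmin, Rmax in H3, H4, Htop_lt. destruct (Rle_dec (vy u) (vy w)).
  - apply (no_vertex_in_gap _ Hk2). rewrite <- Hw. split; lra.
  - apply (no_vertex_in_gap _ Hk). rewrite <- Hu. split; lra.
Qed.

Lemma inP_gap (x y : R) : xl <= x <= xr -> yl < y < yh -> inP P (x, y).
Proof.
  intros Hx Hy.
  destruct (classic (exists e, In e (edges P) /\ on_edge e (x, y))) as [Hon|Hoff]; [left; exact Hon|].
  right.
  destruct (exists_noninteger_between xr (Rmin (IZR (up xr)) (xr + dR))) as [x' [Hx' Hni]].
  { apply Rmin_glb_lt; [apply archimed|lra]. }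
  pose proof (Rmin_l (IZR (up xr)) (xr + dR)). pose proof (Rmin_r (IZR (up xr)) (xr + dR)).
  assert (Hodd : Nat.Odd (length (filter (crosses (x', y)) (edges P)))).
  { apply inP_off_boundary_odd; [|apply Hright; simpl; lra].
    intros e Hin Hon. destruct (ortho_polygon_edge P e HP Hin) as [_ [Hh|Hv]].
    - destruct (exists_small_positive (y - yl) (yh - y)) as [eps [Heps [Ha Hb]]]; try lra.
      apply (horizontal_edge_separates P e x' y eps HP Hin Hh Hon Hni Heps); apply Hright; simpl; lra.
    - exact (Hni _ (vertical_edge_x e x' y Hv Hon)). }
  apply Nat.odd_spec.
  rewrite (filter_ext_in _ (crosses (x', y))); [exact Hodd|].
  intros e Hin. apply crosses_gap_invariant; auto. lra.
Qed.

End Gap_between_edges.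

Lemma INR_mult_lt_succ_le (i k : nat) (t : R) :
  0 < t -> INR i * t < INR k * t -> INR i * t + t <= INR k * t.
Proof.
  intros Ht H. assert (Hik : INR i < INR k) by (apply Rmult_lt_reg_r with t; lra).
  apply INR_lt, le_INR in Hik. rewrite S_INR in Hik.
  assert ((INR i + 1) * t <= INR k * t) by (apply Rmult_le_compat_r; lra). lra.
Qed.

Lemma ext_bounds (P : list vertex) (X q : rect) : rec_pack P X -> ext X q ->
  0 < rw q /\ rw q = rh q /\ rx X <= rx q /\ rx q + rw q <= rx X + rw X /\
  ry X <= ry q /\ ry q + rh q <= ry X + rh X.
Proof.
  intros [[Hw [Hh _]] [k [Hk Hkk]]] [H1 [H2 [i Hi]]].
  assert (Hk1 : 1 <= INR k) by (apply (le_INR 1 k) in Hk; simpl in Hk; lra).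
  pose proof (pos_INR i) as Hi0.
  destruct Hi as [[Hc [Hi1 [Hi2 Hi3]]]|[Hc [Hi1 [Hi2 Hi3]]]].
  - rewrite Rmin_right in H1, H2, Hi1, Hi2 by lra.
    assert (Hk' : exists k', rw X = INR k' * rh X).
    { destruct Hkk as [Hkk|Hkk]; [eauto|]. exists 1%nat. simpl. nra. }
    destruct Hk' as [k' Hk']. rewrite Hk' in Hi1 |- *.
    pose proof (INR_mult_lt_succ_le i k' (rh X) Hh Hi1).
    assert (0 <= INR i * rh X) by (apply Rmult_le_pos; lra).
    repeat split; lra.
  - rewrite Rmin_left in H1, H2, Hi1, Hi3 by lra.
    assert (Hk' : exists k', rh X = INR k' * rw X).
    { destruct Hkk as [Hkk|Hkk]; [|eauto]. exfalso. nra. }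
    destruct Hk' as [k' Hk']. rewrite Hk' in Hi1 |- *.
    pose proof (INR_mult_lt_succ_le i k' (rw X) Hw Hi1).
    assert (0 <= INR i * rw X) by (apply Rmult_le_pos; lra).
    repeat split; lra.
Qed.

Lemma ext_valid_square (P : list vertex) (X q : rect) :
  rec_pack P X -> ext X q -> valid_square P q.
Proof.
  intros HX Hq. destruct (ext_bounds P X q HX Hq) as [Hw [Hsq Hb]].
  destruct HX as [[_ [_ HXin]] _].
  split; [|exact Hsq]. split; [exact Hw|]. split; [lra|].
  intros p [Hpx Hpy]. apply HXin. split; lra.
Qed.

Lemma ext_square (X q : rect) : 0 < rw X -> rw X = rh X -> ext X q -> q = X.
Proof.
  intros Hw Hsq [H1 [H2 [i Hi]]].
  rewrite <- Hsq, Rmin_left in H1, H2, Hi by lra.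
  destruct Hi as [[_ [Hi1 [Hi2 Hi3]]]|[Hc _]]; [|lra].
  assert (Hi0 : INR i < INR 1) by (simpl; apply Rmult_lt_reg_r with (rw X); lra).
  apply INR_lt in Hi0. replace i with 0%nat in Hi2 by lia. simpl in Hi2.
  destruct q, X; simpl in *. f_equal; lra.
Qed.

Lemma ext_square_self (X : rect) : 0 < rw X -> rw X = rh X -> ext X X.
Proof.
  intros Hw Hsq. unfold ext. rewrite <- Hsq, Rmin_left by lra.
  split; [reflexivity|]. split; [reflexivity|]. exists 0%nat. left. simpl. repeat split; lra.
Qed.

Lemma valid_square_rec_pack (P : list vertex) (X : rect) : valid_square P X -> rec_pack P X.
Proof. intros [Hv Hsq]. split; [exact Hv|]. exists 1%nat. split; [lia|]. left. simpl. unfold is_square in Hsq. lra. Qed.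

Lemma overlap_of_common_subrect (A B q : rect) : 0 < rw q -> 0 < rh q ->
  rx A <= rx q -> rx q + rw q <= rx A + rw A -> ry A <= ry q -> ry q + rh q <= ry A + rh A ->
  rx B <= rx q -> rx q + rw q <= rx B + rw B -> ry B <= ry q -> ry q + rh q <= ry B + rh B ->
  overlap A B.
Proof.
  intros. exists (rx q + rw q / 2, ry q + rh q / 2). unfold in_rect_interior; simpl. repeat split; lra.
Qed.

Lemma overlap_ext (P : list vertex) (A X q : rect) : rec_pack P X -> ext X q -> overlap A q -> overlap A X.
Proof.
  intros HX Hq [p [HA Hp]]. destruct (ext_bounds P X q HX Hq) as [_ [_ Hb]].
  exists p. split; [exact HA|]. unfold in_rect_interior in *. lra.
Qed.

Lemma overlap_common_ext (P : list vertex) (X Y q : rect) :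
  rec_pack P X -> rec_pack P Y -> ext X q -> ext Y q -> overlap X Y.
Proof.
  intros HX HY HXq HYq.
  destruct (ext_bounds P X q HX HXq) as [Hw [Hsq HbX]].
  destruct (ext_bounds P Y q HY HYq) as [_ [_ HbY]].
  apply (overlap_of_common_subrect X Y q); lra.
Qed.

Definition right_pack_squares (S : rect) (eta : nat) : list rect :=
  map (fun i => Rect (rx S + rw S + INR i * rw S) (ry S) (rw S) (rw S)) (seq 0 eta).

Lemma ext_right_pack (S : rect) (eta : nat) (q : rect) : 0 < rw S -> (1 <= eta)%nat ->
  ext (right_pack S eta) q <-> In q (right_pack_squares S eta).
Proof.
  intros Hw Heta.
  assert (Heta1 : 1 <= INR eta) by (apply (le_INR 1 eta) in Heta; simpl in Heta; lra).
  unfold ext, right_pack, right_pack_squares. simpl. rewrite Rmin_right by nra.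
  split.
  - intros [H1 [H2 [i [[_ [Hi1 [Hi2 Hi3]]]|[Hc _]]]]]; [|nra].
    assert (Hi : INR i < INR eta) by (apply Rmult_lt_reg_r with (rw S); lra).
    apply INR_lt in Hi.
    apply in_map_iff. exists i. split; [|apply in_seq; lia].
    destruct q; simpl in *. subst. reflexivity.
  - intros Hq. apply in_map_iff in Hq. destruct Hq as [i [<- Hi]]. apply in_seq in Hi.
    simpl. split; [reflexivity|]. split; [reflexivity|]. exists i. left. repeat split; try nra.
    apply Rmult_lt_compat_r; [exact Hw|]. apply lt_INR. lia.
Qed.

Lemma interval_cover_by_steps (n : nat) (s d x : R) : 0 < d -> (1 <= n)%nat ->
  s <= x <= s + INR n * d -> exists i, (i < n)%nat /\ s + INR i * d <= x <= s + INR i * d + d.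
Proof.
  revert s. induction n as [|n IH]; intros s Hd Hn Hx; [lia|].
  destruct (Rle_lt_dec x (s + d)).
  - exists 0%nat. simpl. split; [lia|lra].
  - destruct n as [|n]; [simpl in Hx; lra|].
    destruct (IH (s + d)) as [i [Hi Hxi]]; [exact Hd|lia|rewrite S_INR in Hx; lra|].
    exists (S i). split; [lia|]. rewrite S_INR. lra.
Qed.

Lemma right_pack_squares_cover (S : rect) (eta : nat) (p : point) : 0 < rw S -> (1 <= eta)%nat ->
  in_rect (right_pack S eta) p -> exists q, In q (right_pack_squares S eta) /\ in_rect q p.
Proof.
  intros Hw Heta [Hx Hy]. unfold right_pack in Hx, Hy. simpl in Hx, Hy.
  destruct (interval_cover_by_steps eta (rx S + rw S) (rw S) (fst p) Hw Heta Hx) as [i [Hi Hxi]].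
  exists (Rect (rx S + rw S + INR i * rw S) (ry S) (rw S) (rw S)). split.
  - apply in_map_iff. exists i. split; [reflexivity|]. apply in_seq. lia.
  - split; simpl; lra.
Qed.

(** * Chains of rectangles along a segment *)

Definition rect_eq_dec (a b : rect) : {a = b} + {a <> b}.
Proof.
  destruct a as [a1 a2 a3 a4], b as [b1 b2 b3 b4].
  destruct (Req_EM_T a1 b1); [|right; congruence].
  destruct (Req_EM_T a2 b2); [|right; congruence].
  destruct (Req_EM_T a3 b3); [|right; congruence].
  destruct (Req_EM_T a4 b4); [|right; congruence].
  subst; left; reflexivity.
Defined.

Definition meets_segment (x y m : R) (Q : rect) : Prop :=
  exists p, x < p < y /\ in_rect Q (p, m).

Lemma exists_leftmost (L : list rect) (Pr : rect -> Prop) :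
  (exists Q, In Q L /\ Pr Q) ->
  exists Q, In Q L /\ Pr Q /\ forall Q', In Q' L -> Pr Q' -> rx Q <= rx Q'.
Proof.
  induction L as [|a L IH]; intros [Q [HQ HPQ]]; [destruct HQ|].
  destruct (classic (exists Q, In Q L /\ Pr Q)) as [Hex|Hnex].
  - destruct (IH Hex) as [Q0 [H1 [H2 H3]]].
    destruct (classic (Pr a /\ rx a <= rx Q0)) as [[Ha Hle]|Ha].
    + exists a. split; [left; reflexivity|]. split; [exact Ha|].
      intros Q' [<-|HQ'] HPQ'; [lra|]. specialize (H3 Q' HQ' HPQ'). lra.
    + exists Q0. split; [right; exact H1|]. split; [exact H2|].
      intros Q' [<-|HQ'] HPQ'; [|auto]. apply Rnot_lt_le. intros Hlt. apply Ha. split; [exact HPQ'|lra].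
  - destruct HQ as [<-|HQ]; [|exfalso; eauto].
    exists a. split; [left; reflexivity|]. split; [exact HPQ|].
    intros Q' [<-|HQ'] HPQ'; [lra|]. exfalso; eauto.
Qed.

Lemma leftmost_meeting_starts_before (L : list rect) (x y m : R) (Q0 : rect) : x < y ->
  (forall p, x < p < y -> exists Q, In Q L /\ in_rect Q (p, m)) ->
  (forall Q, In Q L -> meets_segment x y m Q -> rx Q0 <= rx Q) -> rx Q0 <= x.
Proof.
  intros Hxy Hcov Hmin.
  destruct (Rle_lt_dec (rx Q0) x) as [|Hlt]; [assumption|exfalso].
  set (p := x + Rmin (rx Q0 - x) (y - x) / 2).
  pose proof (Rmin_l (rx Q0 - x) (y - x)). pose proof (Rmin_r (rx Q0 - x) (y - x)).
  assert (0 < Rmin (rx Q0 - x) (y - x)) by (apply Rmin_pos; lra).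
  destruct (Hcov p) as [Q [HQ HQp]]; [unfold p; lra|].
  assert (rx Q <= p) by (destruct HQp as [[? ?] _]; simpl in *; lra).
  assert (rx Q0 <= rx Q) by (apply Hmin; [exact HQ|]; exists p; split; [unfold p; lra|exact HQp]).
  unfold p in *. lra.
Qed.

(* Greedy choice from the left: the leftmost rectangle meeting the segment
   starts before x, and the rest of the segment is handled recursively. *)
Lemma segment_chain (d m : R) (L : list rect) (x y : R) : x < y ->
  (forall p, x < p < y -> exists Q, In Q L /\ in_rect Q (p, m)) ->
  (forall Q, In Q L -> meets_segment x y m Q -> rw Q <= d) ->
  exists T, NoDup T /\ incl T L /\
    (forall Q, In Q T -> meets_segment x y m Q /\ rx Q + rw Q <= y) /\
    y - x < (INR (length T) + 1) * d.
Proof.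
  remember (length L) as n eqn:Hn. revert L x Hn.
  induction n as [n IH] using lt_wf_ind. intros L x Hn Hxy Hcov Hw.
  destruct (exists_leftmost L (meets_segment x y m)) as [Q0 [HQ0 [Hm0 Hmin]]].
  { destruct (Hcov ((x + y) / 2)) as [Q [HQ HQp]]; [lra|].
    exists Q. split; [exact HQ|]. exists ((x + y) / 2). split; [lra|exact HQp]. }
  pose proof (leftmost_meeting_starts_before L x y m Q0 Hxy Hcov Hmin) as Hl.
  assert (Hw0 : rw Q0 <= d) by (apply Hw; assumption).
  set (r := rx Q0 + rw Q0).
  assert (Hr : x < r).
  { destruct Hm0 as [p0 [Hp0 [[_ ?] _]]]. simpl in *. unfold r. lra. }
  destruct (Rlt_le_dec r y) as [Hry|Hyr].
  - set (L' := remove rect_eq_dec Q0 L).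
    assert (HL' : (length L' < n)%nat) by (subst n; apply remove_length_lt; exact HQ0).
    destruct (IH _ HL' L' r eq_refl Hry) as [T' [HT1 [HT2 [HT3 HT4]]]].
    + intros p Hp. destruct (Hcov p) as [Q [HQ HQp]]; [lra|]. exists Q. split; [|exact HQp].
      apply in_in_remove; [|exact HQ]. intros ->. destruct HQp as [[_ ?] _]. simpl in *. unfold r in *. lra.
    + intros Q HQ [p [Hp HQp]]. apply in_remove in HQ. apply Hw; [tauto|]. exists p. split; [lra|exact HQp].
    + exists (Q0 :: T'). split; [constructor; [|exact HT1]|].
      { intros HinT. apply HT2 in HinT. exact (remove_In rect_eq_dec L Q0 HinT). }
      split; [intros q [<-|Hq]; [exact HQ0|apply HT2 in Hq; apply in_remove in Hq; tauto]|].
      split.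
      * intros q [<-|Hq]; [split; [exact Hm0|unfold r in *; lra]|].
        destruct (HT3 q Hq) as [[p [Hp Hqp]] Hq2]. split; [|exact Hq2]. exists p. split; [lra|exact Hqp].
      * simpl length. rewrite S_INR. unfold r in *. lra.
  - destruct (Rle_lt_dec r y) as [Hry|Hry].
    + exists [Q0]. split; [constructor; [intros []|constructor]|].
      split; [intros q [<-|[]]; exact HQ0|].
      split; [intros q [<-|[]]; split; [exact Hm0|unfold r in *; lra]|].
      simpl. unfold r in *. lra.
    + exists []. split; [constructor|]. split; [intros q []|]. split; [intros q []|].
      simpl. unfold r in *. lra.
Qed.

(** * Minimum coverings *)

Lemma length_filter_not_in {A : Type} (dec : forall a b : A, {a = b} + {a <> b}) (T L : list A) :
  NoDup T -> incl T L ->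
  (length (filter (fun q => if in_dec dec q T then false else true) L) + length T <= length L)%nat.
Proof.
  intros HT Hinc.
  assert (Hsplit : forall l : list A,
    (length (filter (fun q => if in_dec dec q T then false else true) l)
     + length (filter (fun q => if in_dec dec q T then true else false) l))%nat = length l).
  { induction l as [|a l IH]; simpl; [reflexivity|]. destruct (in_dec dec a T); simpl; lia. }
  assert (Hle : (length T <= length (filter (fun q => if in_dec dec q T then true else false) L))%nat).
  { apply NoDup_incl_length; [exact HT|]. intros q Hq. apply filter_In. split; [exact (Hinc q Hq)|].
    destruct (in_dec dec q T); [reflexivity|contradiction]. }
  specialize (Hsplit L). lia.
Qed.

Lemma min_square_cover_ext (P : list vertex) (A B : rect -> Prop) :
  (forall q, A q <-> B q) -> min_square_cover P A -> min_square_cover P B.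
Proof.
  intros Hab [[Hv Hc] [L [Hnd [Hiff Hmin]]]]. split; [split|].
  - intros sq Hsq. apply Hv, Hab, Hsq.
  - intros p. rewrite Hc. split; intros [sq [H1 H2]]; exists sq; split; auto; apply Hab; auto.
  - exists L. split; [exact Hnd|]. split; [|exact Hmin]. intros sq. rewrite Hiff. apply Hab.
Qed.

Lemma min_square_cover_exchange (P : list vertex) (U : rect -> Prop) (T E : list rect) :
  min_square_cover P U -> NoDup T -> (forall Q, In Q T -> U Q) -> (length E <= length T)%nat ->
  (forall q, In q E -> valid_square P q) ->
  (forall Q p, In Q T -> in_rect Q p -> exists q, (In q E \/ (U q /\ ~ In q T)) /\ in_rect q p) ->
  min_square_cover P (fun q => In q E \/ (U q /\ ~ In q T)).
Proof.
  intros [[Hval Hcov] [L [HLnd [HL Hmin]]]] HTnd HTU HET HEval HTcov.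
  set (L' := nodup rect_eq_dec (E ++ filter (fun q => if in_dec rect_eq_dec q T then false else true) L)).
  assert (HL' : forall q, In q L' <-> In q E \/ (U q /\ ~ In q T)).
  { intros q. unfold L'. rewrite nodup_In, in_app_iff, filter_In, HL.
    destruct (in_dec rect_eq_dec q T); intuition congruence. }
  apply (min_square_cover_ext P (fun q => In q L')); [exact HL'|].
  assert (Hval' : forall q, In q L' -> valid_square P q).
  { intros q Hq. apply HL' in Hq. destruct Hq as [Hq|[Hq _]]; [exact (HEval q Hq)|exact (Hval q Hq)]. }
  split; [split; [exact Hval'|]|].
  - intros p. split.
    + intros Hp. apply Hcov in Hp. destruct Hp as [sq [Hsq Hin]].
      destruct (in_dec rect_eq_dec sq T) as [HsT|HsT].
      * destruct (HTcov sq p HsT Hin) as [q [Hq Hqp]]. exists q. split; [apply HL'; exact Hq|exact Hqp].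
      * exists sq. split; [apply HL'; right; split; assumption|exact Hin].
    + intros [sq [Hsq Hin]]. destruct (Hval' sq Hsq) as [[_ [_ Hv]] _]. exact (Hv p Hin).
  - exists L'. split; [apply NoDup_nodup|]. split; [tauto|].
    intros L'' Hnd Hcov''. specialize (Hmin L'' Hnd Hcov'').
    assert (Hincl : incl T L) by (intros q Hq; apply HL, HTU, Hq).
    pose proof (length_filter_not_in rect_eq_dec T L HTnd Hincl).
    pose proof (NoDup_incl_length (NoDup_nodup rect_eq_dec (E ++ filter (fun q => if in_dec rect_eq_dec q T then false else true) L))
      (fun a Ha => proj1 (nodup_In rect_eq_dec _ a) Ha)).
    rewrite length_app in *. unfold L'. lia.
Qed.

(* Complete Rs by the squares of U that no member of Rs extracts. *)
Lemma partial_solution_of_cover (P : list vertex) (Rs U : rect -> Prop) :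
  min_square_cover P U -> (forall X, Rs X -> rec_pack P X) ->
  (forall X Y sq, Rs X -> Rs Y -> X <> Y -> ext X sq -> ext Y sq -> False) ->
  (forall X sq, Rs X -> ext X sq -> U sq) ->
  partial_solution P Rs.
Proof.
  intros HU Hpack Hdisj HRsU.
  assert (HUsq : forall q, U q -> valid_square P q) by (destruct HU as [[Hv _] _]; exact Hv).
  assert (HUext : forall X q, U X -> ext X q -> q = X).
  { intros X q HX Hq. destruct (HUsq X HX) as [[Hw _] Hsq]. exact (ext_square X q Hw Hsq Hq). }
  set (M := fun X => Rs X \/ (U X /\ ~ exists Z, Rs Z /\ ext Z X)).
  exists M. split; [|intros X HX; left; exact HX].
  split; [|split].
  - intros X [HX|[HX _]]; [exact (Hpack X HX)|exact (valid_square_rec_pack P X (HUsq X HX))].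
  - intros X Y sq [HX|[HXU HXn]] [HY|[HYU HYn]] Hne HXs HYs.
    + exact (Hdisj X Y sq HX HY Hne HXs HYs).
    + rewrite (HUext Y sq HYU HYs) in HXs. apply HYn. exists X. split; assumption.
    + rewrite (HUext X sq HXU HXs) in HYs. apply HXn. exists Y. split; assumption.
    + apply Hne. rewrite <- (HUext X sq HXU HXs). exact (HUext Y sq HYU HYs).
  - apply (min_square_cover_ext P U); [|exact HU].
    intros q. split.
    + intros Hq. destruct (classic (exists Z, Rs Z /\ ext Z q)) as [[Z [HZ HZq]]|Hn].
      * exists Z. split; [left; exact HZ|exact HZq].
      * exists q. split; [right; split; assumption|].
        destruct (HUsq q Hq) as [[Hw _] Hsq]. exact (ext_square_self q Hw Hsq).
    + intros [X [[HX|[HX _]] Hq]]; [exact (HRsU X q HX Hq)|].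
      rewrite (HUext X q HX Hq). exact HX.
Qed.

(* The squares of T are exchanged for the extraction of R; the part of T
   outside R is still covered by S. *)
Lemma partial_solution_add_rec_pack (P : list vertex) (M Rs : rect -> Prop) (S R : rect)
    (E T : list rect) :
  min_covering P M -> (forall X, Rs X -> M X) -> Rs S -> valid_square P S ->
  rec_pack P R -> (forall X, Rs X -> ~ overlap R X) ->
  (forall q, ext R q <-> In q E) -> (forall p, in_rect R p -> exists q, In q E /\ in_rect q p) ->
  NoDup T -> (forall Q, In Q T -> exists X, M X /\ ext X Q) -> (length E <= length T)%nat ->
  (forall Q, In Q T -> overlap R Q /\ forall p, in_rect Q p -> in_rect S p \/ in_rect R p) ->
  partial_solution P (fun X => Rs X \/ X = R).
Proof.
  intros [HMpack [HMdisj HMcover]] HRsM HRsS [[HSw _] HSsq] HR Hdisjoint HE HEcov HTnd HTU HTlen HT.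
  assert (HRs_not_T : forall X q, Rs X -> ext X q -> ~ In q T).
  { intros X q HX Hq HqT. apply (Hdisjoint X HX).
    apply (overlap_ext P R X q (HMpack X (HRsM X HX)) Hq). apply HT, HqT. }
  assert (HSS : ext S S) by exact (ext_square_self S HSw HSsq).
  apply (partial_solution_of_cover P _
    (fun q => In q E \/ ((exists X, M X /\ ext X q) /\ ~ In q T))).
  - apply min_square_cover_exchange; [exact HMcover|exact HTnd|exact HTU|exact HTlen| |].
    + intros q Hq. apply (ext_valid_square P R q HR), HE, Hq.
    + intros Q p HQ Hp. destruct (proj2 (HT Q HQ) p Hp) as [HpS|HpR].
      * exists S. split; [|exact HpS].
        right. split; [exists S; split; [apply HRsM, HRsS|exact HSS]|exact (HRs_not_T S S HRsS HSS)].
      * destruct (HEcov p HpR) as [q [Hq Hqp]]. exists q. split; [left; exact Hq|exact Hqp].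
  - intros X [HX| ->]; [exact (HMpack X (HRsM X HX))|exact HR].
  - intros X Z sq [HX| ->] [HZ| ->] Hne HXs HZs.
    + exact (HMdisj X Z sq (HRsM X HX) (HRsM Z HZ) Hne HXs HZs).
    + exact (Hdisjoint X HX (overlap_common_ext P R X sq HR (HMpack X (HRsM X HX)) HZs HXs)).
    + exact (Hdisjoint Z HZ (overlap_common_ext P R Z sq HR (HMpack Z (HRsM Z HZ)) HXs HZs)).
    + exact (Hne eq_refl).
  - intros X q [HX| ->] Hq.
    + right. split; [exists X; split; [apply HRsM, HX|exact Hq]|exact (HRs_not_T X q HX Hq)].
    + left. apply HE, Hq.
Qed.

Lemma strip_band (e1 e2 : edge) (S Y : rect) :
  e_horizontal e1 -> e_horizontal e2 ->
  hseg_overlaps_edge (rx S) (rx S + rw S) (ry S + rh S) e1 ->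
  hseg_overlaps_edge (rx S) (rx S + rw S) (ry S) e2 ->
  on_edge e1 (rx S + rw S, ry S + rh S) -> on_edge e2 (rx S + rw S, ry S) ->
  0 < rw Y -> rx S + rw S <= rx Y + rw Y ->
  hseg_in_edge (rx Y) (rx Y + rw Y) (ry Y + rh Y) e1 ->
  hseg_in_edge (rx Y) (rx Y + rw Y) (ry Y) e2 ->
  ry Y = ry S /\ ry Y + rh Y = ry S + rh S /\
  exists xa, xa < rx S + rw S /\ forall t, xa <= t <= rx Y + rw Y ->
    on_edge e1 (t, ry S + rh S) /\ on_edge e2 (t, ry S).
Proof.
  intros Hh1 Hh2 [a1 [b1 [Hab1 Hov1]]] [a2 [b2 [Hab2 Hov2]]] Hc1 Hc2 HYw Hfar HY1 HY2.
  pose proof (horizontal_edge_y e1 _ _ Hh1 Hc1) as Hl1.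
  pose proof (horizontal_edge_y e2 _ _ Hh2 Hc2) as Hl2.
  destruct (Hov1 a1 ltac:(lra)) as [Ha1 Hoa1]. destruct (Hov1 b1 ltac:(lra)) as [Hb1 _].
  destruct (Hov2 a2 ltac:(lra)) as [Ha2 Hoa2]. destruct (Hov2 b2 ltac:(lra)) as [Hb2 _].
  assert (HYt : ry Y + rh Y = ry S + rh S).
  { rewrite Hl1. apply (horizontal_edge_y e1 (rx Y)); [exact Hh1|]. apply HY1. lra. }
  assert (HYb : ry Y = ry S).
  { rewrite Hl2. apply (horizontal_edge_y e2 (rx Y)); [exact Hh2|]. apply HY2. lra. }
  split; [exact HYb|]. split; [exact HYt|].
  exists (Rmax a1 a2).
  pose proof (Rmax_l a1 a2). pose proof (Rmax_r a1 a2).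
  split; [unfold Rmax; destruct (Rle_dec _ _); lra|].
  intros t Ht. split.
  - apply (on_edge_between e1 a1 (rx Y + rw Y)); [exact Hoa1| |lra].
    rewrite <- HYt. apply HY1. lra.
  - apply (on_edge_between e2 a2 (rx Y + rw Y)); [exact Hoa2| |lra].
    rewrite <- HYb. apply HY2. lra.
Qed.

Section Right_pack.

Variables (P : list vertex) (e1 e2 : edge) (S Y : rect) (eta : nat) (xa : R).
Hypothesis HP : ortho_polygon P.
Hypothesis He1 : In e1 (edges P).
Hypothesis Hh1 : e_horizontal e1.
Hypothesis He2 : In e2 (edges P).
Hypothesis Hh2 : e_horizontal e2.
Hypothesis Heta : (1 <= eta)%nat.
Hypothesis HS : valid_square P S.
Hypothesis HY : valid_rect P Y.
Hypothesis HYb : ry Y = ry S.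
Hypothesis HYt : ry Y + rh Y = ry S + rh S.
Hypothesis Hxa : xa < rx S + rw S.
Hypothesis Hfar : rx S + rw S + INR eta * rw S < rx Y + rw Y.
Hypothesis Hband : forall t, xa <= t <= rx Y + rw Y ->
  on_edge e1 (t, ry S + rh S) /\ on_edge e2 (t, ry S).

Let Hsq : rw S = rh S := proj2 HS.
Let HSw : 0 < rw S := proj1 (proj1 HS).
Let HSin : forall p, in_rect S p -> inP P p := proj2 (proj2 (proj1 HS)).
Let HYw : 0 < rw Y := proj1 HY.
Let HYin : forall p, in_rect Y p -> inP P p := proj2 (proj2 HY).
Let Heta1 : 1 <= INR eta := le_INR 1 eta Heta.

(* Between S and the strip Y lies an empty gap of the band; see [inP_gap]. *)
Lemma right_pack_inside (p : point) : in_rect (right_pack S eta) p -> inP P p.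
Proof.
  destruct p as [px py]. intros [Hpx Hpy]. unfold right_pack in Hpx, Hpy. simpl in Hpx, Hpy.
  assert (Hetad : rw S <= INR eta * rw S) by nra.
  destruct (Rle_lt_or_eq_dec _ _ (proj1 Hpy)) as [Hlo|<-].
  2: { left. exists e2. split; [exact He2|]. apply Hband. lra. }
  destruct (Rle_lt_or_eq_dec _ _ (proj2 Hpy)) as [Hhi| ->].
  2: { left. exists e1. split; [exact He1|]. rewrite Hsq. apply Hband. lra. }
  destruct (Rle_lt_dec (rx Y) px).
  - apply HYin. split; simpl; lra.
  - apply (inP_gap P e1 e2 xa (rx S + rw S) (rx Y) (rx Y + rw Y) (ry S) (ry S + rh S) (rw S) (rw Y));
      try assumption; try lra.
    + intros t Ht. apply Hband, Ht.
    + intros t Ht. apply Hband, Ht.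
    + intros q Hq1 Hq2. apply HSin. split; lra.
    + intros q Hq1 Hq2. apply HYin. split; lra.
Qed.

Lemma right_pack_rec_pack : rec_pack P (right_pack S eta).
Proof.
  split; [split; [simpl; nra|split; [simpl; lra|exact right_pack_inside]]|].
  exists eta. split; [exact Heta|]. left. reflexivity.
Qed.

(* The squares of a cover meeting the midline of the rec-pack stay in the band,
   so they have side at most d: at least eta of them lie in S and the rec-pack. *)
Lemma right_pack_chain (U : rect -> Prop) : min_square_cover P U ->
  exists T, NoDup T /\ (forall Q, In Q T -> U Q) /\ (eta <= length T)%nat /\
    forall Q, In Q T -> overlap (right_pack S eta) Q /\
      forall p, in_rect Q p -> in_rect S p \/ in_rect (right_pack S eta) p.
Proof.
  intros [[HUval HUcov] [L [_ [HL _]]]].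
  assert (HLval : forall sq, In sq L -> valid_square P sq) by (intros sq Hin; apply HUval, HL, Hin).
  assert (HLcov : forall p, inP P p -> exists sq, In sq L /\ in_rect sq p).
  { intros p Hp. destruct (proj1 (HUcov p) Hp) as [sq [HUsq Hin]]. exists sq. rewrite HL. auto. }
  set (x := rx S + rw S). set (y := x + INR eta * rw S). set (m := ry S + rw S / 2).
  assert (Hin_band : forall Q, In Q L -> meets_segment x y m Q ->
    ry S <= ry Q /\ ry Q + rh Q <= ry S + rh S /\ rw Q = rh Q /\ 0 < rw Q).
  { intros Q HQ [p [Hp HQp]]. destruct (HLval Q HQ) as [HQv HQsq].
    destruct (valid_rect_within_band P e1 e2 xa (rx Y + rw Y) (ry S) (ry S + rh S) Q p m
      HP He1 Hh1 He2 Hh2 (fun t Ht => proj1 (Hband t Ht)) (fun t Ht => proj2 (Hband t Ht))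
      HQv HQp) as [H1 H2]; subst x y m; try lra.
    repeat split; try assumption. apply HQv. }
  destruct (segment_chain (rw S) m L x y) as [T [HTnd [HTincl [HT HTlen]]]].
  - subst x y. nra.
  - intros p Hp. apply HLcov, right_pack_inside. subst x y m. split; simpl; lra.
  - intros Q HQ Hm. destruct (Hin_band Q HQ Hm) as [? [? [? ?]]]. lra.
  - exists T. split; [exact HTnd|]. split; [intros Q HQ; apply HL, HTincl, HQ|]. split.
    + assert (Hlt : INR eta < INR (Datatypes.S (length T))).
      { rewrite S_INR. apply Rmult_lt_reg_r with (rw S); [exact HSw|]. subst x y. lra. }
      apply INR_lt in Hlt. lia.
    + intros Q HQ. destruct (HT Q HQ) as [Hm Hright].
      destruct (Hin_band Q (HTincl Q HQ) Hm) as [Hbot [Htop [HQsq HQpos]]].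
      destruct Hm as [p [Hp [[Hp1 Hp2] _]]]. simpl in Hp1, Hp2.
      assert (HQw : rw Q <= rw S) by lra.
      split.
      * set (px := (Rmax (rx Q) x + (rx Q + rw Q)) / 2).
        assert (Hpx : rx Q < px /\ x < px /\ px < rx Q + rw Q).
        { subst px. unfold Rmax. destruct (Rle_dec _ _); lra. }
        exists (px, ry Q + rh Q / 2). unfold in_rect_interior, right_pack. simpl. subst x y. lra.
      * intros pt [Hx Hy]. destruct (Rle_lt_dec (fst pt) x).
        -- left. subst x y. split; lra.
        -- right. unfold right_pack. subst x y. split; simpl; lra.
Qed.

End Right_pack.

Theorem lemma4p13 (P : list vertex) (eta : nat) (S Y : rect) (e1 e2 : edge)
    (Rs : rect -> Prop) :
  ortho_polygon P ->
  (1 <= eta)%nat ->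
  maximal_square P S ->
  In e1 (edges P) -> e_horizontal e1 ->
  In e2 (edges P) -> e_horizontal e2 ->
  hseg_overlaps_edge (rx S) (rx S + rw S) (ry S + rh S) e1 ->
  hseg_overlaps_edge (rx S) (rx S + rw S) (ry S) e2 ->
  on_edge e1 (rx S + rw S, ry S + rh S) ->
  on_edge e2 (rx S + rw S, ry S) ->
  is_strip P Y -> rh Y < rw Y ->
  hseg_in_edge (rx Y) (rx Y + rw Y) (ry Y + rh Y) e1 ->
  hseg_in_edge (rx Y) (rx Y + rw Y) (ry Y) e2 ->
  (rx Y + rw Y) - (rx S + rw S) > INR eta * rw S ->
  partial_solution P Rs ->
  Rs S ->
  (forall X, Rs X -> ~ overlap (right_pack S eta) X) ->
  partial_solution P (fun X => Rs X \/ X = right_pack S eta).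
Proof.
  intros HP Heta [HS _] He1 Hh1 He2 Hh2 Hov1 Hov2 Hc1 Hc2 [[HY _] _] _ HY1 HY2 Hfar
    [M [HM HRsM]] HRsS Hdisjoint.
  assert (HSw : 0 < rw S) by apply HS.
  assert (Heta1 : 1 <= INR eta) by exact (le_INR 1 eta Heta).
  destruct (strip_band e1 e2 S Y Hh1 Hh2 Hov1 Hov2 Hc1 Hc2 (proj1 HY) ltac:(nra) HY1 HY2)
    as [HYb [HYt [xa [Hxa Hband]]]].
  assert (Hfar' : rx S + rw S + INR eta * rw S < rx Y + rw Y) by lra.
  assert (HR : rec_pack P (right_pack S eta))
    by exact (right_pack_rec_pack P e1 e2 S Y eta xa HP He1 Hh1 He2 Hh2 Heta HS HY HYb HYt Hxa Hfar' Hband).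
  destruct (right_pack_chain P e1 e2 S Y eta xa HP He1 Hh1 He2 Hh2 Heta HS HY HYb HYt Hxa Hfar'
    Hband _ (proj2 (proj2 HM))) as [T [HTnd [HTU [HTlen HT]]]].
  apply (partial_solution_add_rec_pack P M Rs S _ (right_pack_squares S eta) T
    HM HRsM HRsS HS HR Hdisjoint); [| |exact HTnd|exact HTU| |exact HT].
  - intros q. apply ext_right_pack; assumption.
  - intros p. apply right_pack_squares_cover; assumption.
  - unfold right_pack_squares. rewrite length_map, length_seq. exact HTlen.
Qed.
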